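(* Let $d\ge2$ and $p,q\ge0$. Then $$\sum_{j=0}^{\min\{p,q\}}Q^{(d)}_{p-j,q-j}(z)=\frac{d}{p+q+d}\,Q^{(d+1)}_{pq}(z),$$ equivalently, $$Q^{(d)}_{p,q}(z)=\frac{d}{p+q+d}Q^{(d+1)}_{pq}(z)-\frac{d}{p+q+d-2}Q^{(d+1)}_{p-1,q-1}(z),$$ with the convention $Q_{a,b}=0$ if $a<0$ or $b<0$.
   Context: For $d\ge2$ and $p,q\ge0$, the complex Gegenbauer polynomial is the polynomial in $z,\overline z$ $$Q_{pq}^{(d)}(z)=\frac{p+q+d-1}{(d-1)!}\sum_{j=0}^{\min\{p,q\}}(-1)^j\frac{(d+p+q-j-2)!}{j!(p-j)!(q-j)!}z^{p-j}\overline{z}^{q-j}.$$ *)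

(* Complex numbers: any numClosedFieldType C (e.g. algC, or
   R[i] for a real closed field R); conjugation is Num.conj, written z^*. *)
From mathcomp Require Import all_boot all_order all_algebra.
Set Implicit Arguments. Unset Strict Implicit. Unset Printing Implicit Defensive.
Import Order.TTheory GRing.Theory Num.Theory.
Local Open Scope ring_scope.

Definition gegQ {C : numClosedFieldType} (d p q : nat) (z : C) : C :=
  ((p + q + d - 1)%N%:R / ((d - 1)`!)%:R) *
  \sum_(j < (minn p q).+1)
     ((-1) ^+ j * (((d + p + q - j - 2)`!)%:R / ((j`! * (p - j)`! * (q - j)`!)%N)%:R)
      * z ^+ (p - j) * (z^*) ^+ (q - j)).

Definition gegQz {C : numClosedFieldType} (d : nat) (a b : int) (z : C) : C :=
  match a, b with
  | Posz p, Posz q => gegQ d p q z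
  | _, _ => 0
  end.

(** Write [R_pq = d/(p+q+d) Q^(d+1)_pq].  Both [Q^(d)_pq] and [R_pq - R_(p-1,q-1)]
    expand in the monomials [z^(p-j) conj(z)^(q-j)], and after cancelling
    factorials their coefficients agree because [N - 1 = (N - j - 1) + j]
    with [N = p + q + d].  This is the second identity; summing it along the
    diagonal [(p - j, q - j)] telescopes to the first. *)

From mathcomp Require Import all_boot all_order all_algebra.
From mathcomp Require Import zify ring.
Import Order.TTheory GRing.Theory Num.Theory.
Local Open Scope ring_scope.

Lemma sum_diag_telescope (V : zmodType) (f g : nat -> nat -> V) :
  (forall p q, minn p q = 0%N -> f p q = g p q) ->
  (forall p q, f p.+1 q.+1 = g p.+1 q.+1 - g p q) ->
  forall p q, \sum_(j < (minn p q).+1) f (p - j)%N (q - j)%N = g p q.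
Proof.
move=> f_edge f_succ; elim=> [|p IHp] [|q].
1-3: by rewrite big_ord1 f_edge.
rewrite minnSS big_ord_recl f_succ.
under eq_bigr => i _ do rewrite lift0 !subSS.
by rewrite IHp subrK.
Qed.

Lemma natr_fact_neq0 (R : numDomainType) n : n`!%:R != 0 :> R.
Proof. by rewrite pnatr_eq0 -lt0n fact_gt0. Qed.

Section GegenbauerRecurrence.
Variable C : numClosedFieldType.

Definition gegQ_coef (d p q j : nat) : C :=
  (p + q + d - 1)%N%:R / ((d - 1)`!)%:R *
  ((-1) ^+ j * (((d + p + q - j - 2)`!)%:R / ((j`! * (p - j)`! * (q - j)`!)%N)%:R)).

Lemma gegQE d p q (z : C) : gegQ d p q z =
  \sum_(j < (minn p q).+1) gegQ_coef d p q j * z ^+ (p - j) * z^* ^+ (q - j).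
Proof. by rewrite /gegQ mulr_sumr; apply: eq_bigr => j _; rewrite /gegQ_coef !mulrA. Qed.

Lemma gegQ_coefD e a b j : gegQ_coef e.+2 (a + j) (b + j) j =
  (e + a + b + j + j).+1%:R / (e.+1)`!%:R *
  ((-1) ^+ j * ((e + a + b + j)`!%:R / (j`! * a`! * b`!)%:R)).
Proof. by rewrite /gegQ_coef !addnK; congr (_%:R / _ * (_ * (_`!%:R / _))); lia. Qed.

Lemma gegQ_coef0 d p q : (2 <= d)%N ->
  gegQ_coef d p q 0 = d%:R / (p + q + d)%N%:R * gegQ_coef d.+1 p q 0.
Proof.
case: d => [|[|e]] // _.
have := gegQ_coefD e p q 0; have := gegQ_coefD e.+1 p q 0.
rewrite !addn0 => -> ->; rewrite !addSn (factS e.+1) (factS (e + p + q)) fact0 expr0.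
field.
by rewrite !natr_fact_neq0 -!natrD !pnatr_eq0; lia.
Qed.

Lemma gegQ_coefS d p q j : (2 <= d)%N -> (j <= p)%N -> (j <= q)%N ->
  gegQ_coef d p.+1 q.+1 j.+1 =
    d%:R / (p.+1 + q.+1 + d)%N%:R * gegQ_coef d.+1 p.+1 q.+1 j.+1
  - d%:R / (p + q + d)%N%:R * gegQ_coef d.+1 p q j.
Proof.
case: d => [|[|e]] // _ /subnK <- /subnK <-; move: (p - j)%N (q - j)%N => a b.
rewrite -!addnS !gegQ_coefD !addSn !addnS.
rewrite (factS j) (factS e.+1) (factS (e + a + b + j).+1) exprS.
field.
by rewrite !natr_fact_neq0 -[1 : C]/(1%:R) -!natrD !pnatr_eq0; lia.
Qed.

Lemma gegQ_recurrence_edge d p q (z : C) : (2 <= d)%N -> minn p q = 0%N ->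
  gegQ d p q z = d%:R / (p + q + d)%N%:R * gegQ d.+1 p q z.
Proof.
by move=> hd pq0; rewrite !gegQE pq0 !big_ord1 gegQ_coef0 // !mulrA.
Qed.

Lemma gegQ_recurrence d p q (z : C) : (2 <= d)%N ->
  gegQ d p.+1 q.+1 z =
    d%:R / (p.+1 + q.+1 + d)%N%:R * gegQ d.+1 p.+1 q.+1 z
  - d%:R / (p + q + d)%N%:R * gegQ d.+1 p q z.
Proof.
move=> hd; rewrite !gegQE minnSS big_ord_recl [in RHS]big_ord_recl gegQ_coef0 //.
rewrite mulrDr !mulr_sumr -addrA -sumrB; congr (_ + _); first by rewrite !mulrA.
apply: eq_bigr => i _; have := ltn_ord i; rewrite ltnS leq_min => /andP[ip iq].
by rewrite lift0 !subSS gegQ_coefS //; ring.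
Qed.

End GegenbauerRecurrence.

Theorem lemma5p10 (C : numClosedFieldType) (d p q : nat) (hd : (2 <= d)%N) (z : C) :
  (\sum_(j < (minn p q).+1) gegQ d (p - j) (q - j) z
     = (d%:R / (p + q + d)%N%:R) * gegQ d.+1 p q z)
  /\
  (gegQ d p q z
     = (d%:R / (p + q + d)%N%:R) * gegQz d.+1 (Posz p) (Posz q) z
       - (d%:R / ((p + q + d)%N%:R - 2)) * gegQz d.+1 (Posz p - 1) (Posz q - 1) z).
Proof.
split.
  pose R p q := d%:R / (p + q + d)%N%:R * gegQ d.+1 p q z.
  apply: (sum_diag_telescope _ (fun p q => gegQ d p q z) R) => p' q'.
    exact: gegQ_recurrence_edge.
  exact: gegQ_recurrence.
case: p => [|p]; last case: q => [|q].
- by rewrite /= mulr0 subr0 gegQ_recurrence_edge // min0n.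
- by rewrite -predn_int //= mulr0 subr0 gegQ_recurrence_edge // minn0.
have -> : (p.+1 + q.+1 + d)%N%:R - 2 = (p + q + d)%N%:R :> C by ring.
by rewrite -!predn_int //=; exact: gegQ_recurrence.
Qed.
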